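(* Let $s\in\{1,\ldots,d\}$, $M\in\mathbb{R}^{\mathcal{I}}$, $P\subset\mathcal{I}$, and let $G=G^-$ be a TT representation with $G_1,\ldots,G_{s-1}$ left orthogonal and $G_{s+1},\ldots,G_d$ right orthogonal. Let $S:=(M-A^{G^-})|_P$ and define the matrix block $N$ by $N(j):=(G^{<s})^T S_{(s)}(j)\,(G^{>s})^T$ for $j\in\mathcal{I}_s$. For $\alpha\in\mathbb{R}$ let $G^\alpha_s:=G^-_s+\alpha N$. Assume $\sum_{j\in\mathcal{I}_s}\|(G^{<s}N(j)G^{>s})|_{P,s,j}\|_F^2\neq 0$. Then the optimal overrelaxation parameter \[ \alpha^* := \mathrm{argmin}_{\alpha\in\mathbb{R}} \sum_{j\in\mathcal{I}_s}\big\|(G^{<s}\, G^{\alpha}_s(j)\, G^{>s} - M_{(s)}(j))|_{P,s,j}\big\|_F^2 \] is given by \[ \alpha^* = \frac{\sum_{j\in\mathcal{I}_s}\|N(j)\|_F^2}{\sum_{j\in\mathcal{I}_s}\|(G^{<s}N(j)G^{>s})|_{P,s,j}\|_F^2}. \]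
   Context: Let $\mathcal{I}_\mu=\{1,\ldots,n_\mu\}$, $\mathcal{I}=\mathcal{I}_1\times\cdots\times\mathcal{I}_d$. A TT representation with ranks $r_0=1,r_1,\ldots,r_{d-1},r_d=1$ consists of maps $G_\mu:\mathcal{I}_\mu\to\mathbb{R}^{r_{\mu-1}\times r_\mu}$; it represents $A^G_{i_1,\ldots,i_d}=G_1(i_1)\cdots G_d(i_d)$. $G_\mu$ is left orthogonal if $\sum_{i}G_\mu(i)^TG_\mu(i)=I$, right orthogonal if $\sum_i G_\mu(i)G_\mu(i)^T=I$. For $X\in\mathbb{R}^{\mathcal{I}}$, $X|_P$ is the tensor equal to $X$ on $P$ and $0$ elsewhere. $G^{<s}$ is the matrix with rows indexed by $(i_1,\ldots,i_{s-1})$, row $(i_1,\ldots,i_{s-1})$ being $G_1(i_1)\cdots G_{s-1}(i_{s-1})\in\mathbb{R}^{1\times r_{s-1}}$ ($1\times1$ identity if $s=1$); $G^{>s}$ is the matrix with columns indexed by $(i_{s+1},\ldots,i_d)$, column $(i_{s+1},\ldots,i_d)$ being $G_{s+1}(i_{s+1})\cdots G_d(i_d)\in\mathbb{R}^{r_s\times1}$ ($1\times1$ identity if $s=d$). For $X\in\mathbb{R}^{\mathcal{I}}$, $X_{(s)}(j)$ is the matrix with rows $(i_1,\ldots,i_{s-1})$, columns $(i_{s+1},\ldots,i_d)$ and entries $X_{i_1,\ldots,i_{s-1},j,i_{s+1},\ldots,i_d}$. For a matrix $Y$ with rows indexed by $(i_1,\ldots,i_{s-1})$ and columns by $(i_{s+1},\ldots,i_d)$,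 $Y|_{P,s,j}$ sets to zero every entry $((i_1,\ldots,i_{s-1}),(i_{s+1},\ldots,i_d))$ for which $(i_1,\ldots,i_{s-1},j,i_{s+1},\ldots,i_d)\notin P$. *)

From HB Require Import structures.
From mathcomp Require Import all_boot all_order all_algebra.
From mathcomp Require Import reals.
Set Implicit Arguments. Unset Strict Implicit. Unset Printing Implicit Defensive.
Import Order.TTheory GRing.Theory Num.Theory.
Local Open Scope ring_scope.

(* Conventions (0-based): cores are indexed by mu : 'I_d (mu = 0..d-1 is the
   paper's mu+1); core mu has size r mu x r (mu+1); r 0 = r d = 1 are
   hypotheses. *)

Section TT.
Variables (R : realType) (d : nat) (n : 'I_d -> nat) (r : nat -> nat).

Definition MI := {dffun forall mu : 'I_d, 'I_(n mu)}.

Definition TTcores := forall mu : 'I_d, 'I_(n mu) -> 'M[R]_(r mu, r mu.+1).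

Variables (h0 : (r 0 = 1)%N) (hd : (r d = 1)%N).
Variable G : TTcores.

(* G_k(x_k) for k < d (and 0 otherwise; never used out of range) *)
Definition coreAt (x : MI) (k : nat) : 'M[R]_(r k, r k.+1) :=
  (if (k < d)%N as b return (k < d)%N = b -> 'M[R]_(r k, r k.+1)
   then fun H => @G (Ordinal H) (x (Ordinal H))
   else fun _ => 0) erefl.

Fixpoint lprod (x : MI) (m : nat) : 'M[R]_(r 0, r m) :=
  match m with
  | 0 => 1%:M
  | m'.+1 => lprod x m' *m coreAt x m'
  end.

Fixpoint seg (x : MI) (a m : nat) : 'M[R]_(r a, r (m + a)) :=
  match m with
  | 0 => 1%:M
  | m'.+1 => seg x a m' *m coreAt x (m' + a)
  end.

Definition TTval (x : MI) : R := (castmx (h0, hd) (lprod x d)) ord0 ord0.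

(* row x of G^{<s} (it only depends on the components of x before s) *)
Definition Gless (s : 'I_d) (x : MI) : 'M[R]_(1, r s) :=
  castmx (h0, erefl) (lprod x s).

Lemma Ggreat_eq (s : 'I_d) : r (d - s.+1 + s.+1) = 1.
Proof. by rewrite subnK ?ltn_ord. Qed.

(* column x of G^{>s} (it only depends on the components of x after s) *)
Definition Ggreat (s : 'I_d) (x : MI) : 'M[R]_(r s.+1, 1) :=
  castmx (erefl, Ggreat_eq s) (seg x s.+1 (d - s.+1)).

End TT.

Section Lemma.
Variables (R : realType) (d : nat) (n : 'I_d -> nat) (r : nat -> nat).
Variables (h0 : (r 0 = 1)%N) (hd : (r d = 1)%N) (G : TTcores R n r).
Variables (s : 'I_d) (M : MI n -> R) (P : {set MI n}).

Definition frob2 (p q : nat) (A : 'M[R]_(p, q)) : R :=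
  \sum_(a < p) \sum_(b < q) A a b ^+ 2.

Definition Sres (x : MI n) : R := if x \in P then M x - TTval h0 hd G x else 0.

(* N(j) = (G^{<s})^T S_(s)(j) (G^{>s})^T, the matrix product written out:
   sum over rows (x_1..x_{s-1}) and columns (x_{s+1}..x_d), i.e. over all
   multi-indices x with x_s = j *)
Definition Nblk (j : 'I_(n s)) : 'M[R]_(r s, r s.+1) :=
  \sum_(x : MI n | x s == j)
     Sres x *: ((Gless h0 G s x)^T *m (Ggreat hd G s x)^T).

Definition Galpha (alpha : R) (j : 'I_(n s)) : 'M[R]_(r s, r s.+1) :=
  @G s j + alpha *: Nblk j.

(* sum_j || (G^{<s} G^alpha_s(j) G^{>s} - M_(s)(j))|_{P,s,j} ||_F^2 ,
   the Frobenius norms written out as sums over the entries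
   ((x_1..x_{s-1}),(x_{s+1}..x_d)) for x_s = j, i.e. over all x *)
Definition objective (alpha : R) : R :=
  \sum_(x : MI n)
    (if x \in P then
       ((Gless h0 G s x *m Galpha alpha (x s) *m Ggreat hd G s x) ord0 ord0
         - M x) ^+ 2
     else 0).

Definition denomN : R :=
  \sum_(x : MI n)
    (if x \in P then
       ((Gless h0 G s x *m Nblk (x s) *m Ggreat hd G s x) ord0 ord0) ^+ 2
     else 0).

Definition numerN : R := \sum_(j : 'I_(n s)) frob2 (Nblk j).

End Lemma.

(** The objective is a quadratic polynomial in [alpha] with leading coefficient
    [denomN] (positive, being a nonzero sum of squares), so its unique minimiser
    is minus half the linear coefficient over the leading one.  The linear
    coefficient is [-2 <S, L N>], where [L] maps core blocks to restricted
    tensors, [L X = (G^{<s} X(x_s) G^{>s})|_P]; since [N] is by definition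
    [L^T S], this cross term is [-2 ||N||^2]. *)

From HB Require Import structures.
From mathcomp Require Import all_boot all_order all_algebra.
From mathcomp Require Import reals ring.
Import Order.TTheory GRing.Theory Num.Theory.
Local Open Scope ring_scope.
Set Implicit Arguments. Unset Strict Implicit.

Lemma quadratic_argminP (F : realFieldType) (f : F -> F) (a2 a1 a0 : F) :
  0 < a2 -> (forall b, f b = b ^+ 2 * a2 - 2 * b * a1 + a0) ->
  forall a, (forall b, f a <= f b) <-> a = a1 / a2.
Proof.
move=> a2_gt0 fE a.
have fBmin b : f b - f (a1 / a2) = a2 * (b - a1 / a2) ^+ 2.
  by rewrite !fE; field; rewrite gt_eqF.
split=> [amin | ->{a} b]; last by rewrite -subr_ge0 fBmin mulr_ge0 ?sqr_ge0 ?ltW.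
apply/eqP; rewrite -subr_eq0 -sqrf_eq0 eq_le sqr_ge0 andbT.
by rewrite -(pmulr_rle0 _ a2_gt0) -fBmin subr_le0.
Qed.

Lemma castmx_mulmx (R : pzRingType) p p' q t t' (e1 : p = p') (e2 : t = t')
    (A : 'M[R]_(p, q)) (B : 'M[R]_(q, t)) :
  castmx (e1, e2) (A *m B) = castmx (e1, erefl) A *m castmx (erefl, e2) B.
Proof. by case: p' / e1; case: t' / e2; rewrite !castmx_id. Qed.

Section TTSplit.
Variables (R : realType) (d : nat) (n : 'I_d -> nat) (r : nat -> nat).
Variables (h0 : (r 0 = 1)%N) (hd : (r d = 1)%N) (G : TTcores R n r).

Lemma lprodD (x : MI n) (a m : nat) :
  lprod G x (m + a) = lprod G x a *m seg G x a m.
Proof. by elim: m => [|m IHm] /=; rewrite ?mulmx1 // IHm mulmxA. Qed.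

Lemma coreAt_ord (x : MI n) (k : 'I_d) : coreAt G x k = @G k (x k).
Proof.
case: k => k lt_kd; rewrite /coreAt /=.
move: (erefl (k < d)%N); case: {2 3}(k < d)%N => lt_kd'.
  by rewrite (bool_irrelevance lt_kd' lt_kd).
by rewrite lt_kd in lt_kd'.
Qed.

Lemma castmx_lprod (x : MI n) m1 m2 (e : m1 = m2)
    (h1 : r m1 = 1%N) (h2 : r m2 = 1%N) :
  castmx (h0, h1) (lprod G x m1) = castmx (h0, h2) (lprod G x m2).
Proof. by case: m2 / e h2 => h2; rewrite (eq_irrelevance h1 h2). Qed.

Lemma TTval_GlessGgreat (s : 'I_d) (x : MI n) :
  TTval h0 hd G x = (Gless h0 G s x *m @G s (x s) *m Ggreat hd G s x) ord0 ord0.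
Proof.
rewrite /TTval (castmx_lprod x (esym (subnK (ltn_ord s))) hd (Ggreat_eq hd s)).
by rewrite lprodD /= !castmx_mulmx castmx_id coreAt_ord.
Qed.

End TTSplit.

Section Overrelaxation.
Variables (R : realType) (d : nat) (n : 'I_d -> nat) (r : nat -> nat).
Variables (h0 : (r 0 = 1)%N) (hd : (r d = 1)%N) (G : TTcores R n r).
Variables (s : 'I_d) (M : MI n -> R) (P : {set MI n}).

Let Gl x := Gless h0 G s x.
Let Gg x := Ggreat hd G s x.
Let N (j : 'I_(n s)) := Nblk h0 hd G M P j.
Let S x := Sres h0 hd G M P x.
Let contract (X : 'M[R]_(r s, r s.+1)) x := (Gl x *m X *m Gg x) ord0 ord0.

Lemma Nblk_entry j a b :
  N j a b = \sum_(x : MI n | x s == j) S x * (Gl x ord0 a * Gg x b ord0).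
Proof.
by rewrite /N /Nblk summxE; apply: eq_bigr => x _; rewrite !mxE big_ord1 !mxE.
Qed.

Lemma contract_mxE X x :
  contract X x = \sum_a \sum_b X a b * (Gl x ord0 a * Gg x b ord0).
Proof.
rewrite /contract !mxE exchange_big; apply: eq_bigr => b _.
by rewrite [in LHS]mxE mulr_suml; apply: eq_bigr => a _; ring.
Qed.

Lemma residual_contract_Nblk :
  \sum_(x : MI n) S x * contract (N (x s)) x = numerN h0 hd G s M P.
Proof.
rewrite (partition_big (fun x : MI n => x s) xpredT) //=.
apply: eq_bigr => j _; rewrite /frob2.
transitivity (\sum_(x : MI n | x s == j) \sum_a \sum_b
                N j a b * (S x * (Gl x ord0 a * Gg x b ord0))).
  apply: eq_bigr => x /eqP ->; rewrite contract_mxE mulr_sumr.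
  by apply: eq_bigr => a _; rewrite mulr_sumr; apply: eq_bigr => b _; ring.
rewrite exchange_big; apply: eq_bigr => a _.
by rewrite exchange_big; apply: eq_bigr => b _; rewrite -mulr_sumr -Nblk_entry.
Qed.

Lemma objective_quadratic alpha :
  objective h0 hd G s M P alpha =
  alpha ^+ 2 * denomN h0 hd G s M P - 2 * alpha * numerN h0 hd G s M P
  + \sum_(x : MI n) S x ^+ 2.
Proof.
rewrite -residual_contract_Nblk /objective /denomN !mulr_sumr -sumrB -big_split /=.
apply: eq_bigr => x _; rewrite /S /Sres.
case: (x \in P); last by ring.
rewrite (TTval_GlessGgreat h0 hd G s x) /Galpha mulmxDr mulmxDl.
rewrite -scalemxAr -scalemxAl mxE [X in _ + X - M x]mxE /contract.
set a := (_ *m G (x s) *m _) ord0 ord0.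
set b := (_ *m Nblk _ _ _ _ _ _ *m _) ord0 ord0.
ring.
Qed.

Lemma denomN_ge0 : 0 <= denomN h0 hd G s M P.
Proof. by apply: sumr_ge0 => x _; case: (x \in P); rewrite ?sqr_ge0. Qed.

End Overrelaxation.

Theorem lemma3p14 (R : realType) (d : nat) (n : 'I_d -> nat) (r : nat -> nat)
  (h0 : (r 0 = 1)%N) (hd : (r d = 1)%N) (G : TTcores R n r)
  (s : 'I_d) (M : MI n -> R) (P : {set MI n}) :
  (* G_1, ..., G_{s-1} left orthogonal *)
  (forall mu : 'I_d, (mu < s)%N ->
     \sum_(i : 'I_(n mu)) (@G mu i)^T *m @G mu i = 1%:M) ->
  (* G_{s+1}, ..., G_d right orthogonal *)
  (forall mu : 'I_d, (s < mu)%N ->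
     \sum_(i : 'I_(n mu)) @G mu i *m (@G mu i)^T = 1%:M) ->
  denomN h0 hd G s M P != 0 ->
  (* alpha is an argmin of the objective iff it equals the formula *)
  forall alpha : R,
    (forall beta : R,
       objective h0 hd G s M P alpha <= objective h0 hd G s M P beta)
    <-> alpha = numerN h0 hd G s M P / denomN h0 hd G s M P.
Proof.
move=> _ _ denomN_neq0.
apply: quadratic_argminP; last exact: objective_quadratic.
by rewrite lt_def denomN_neq0 denomN_ge0.
Qed.
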